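(* Let $\Omega\subset\mathbb{R}^2$ be a Jordan domain with analytic boundary, let $f^{(0)}$ be a harmonic function in $\Omega$ extending to a real analytic function in $\overline\Omega$ with nonvanishing Hessian on $\overline\Omega$ (including $\partial\Omega$), and let $\varepsilon>0$. Then there is at most one real analytic family $f\colon\overline\Omega\times[-\varepsilon;\varepsilon]\to\mathbb{R}$ satisfying $f_{xx}+f_{yy}=t\sqrt{(f_{xy})^2-f_{xx}f_{yy}}$ and such that $f(x,y,t)=f^{(0)}(x,y)$ whenever $t=0$ or $(x,y)\in\partial\Omega$.
   Context: A Jordan domain with analytic boundary is a domain bounded by the image of a periodic injective real analytic map $\mathbb{R}\to\mathbb{R}^2$ with nowhere vanishing derivative. A real analytic family is a map $\overline\Omega\times[-\varepsilon;\varepsilon]\to\mathbb{R}$ extending to a real analytic function on a neighborhood of $\overline\Omega\times[-\varepsilon;\varepsilon]$. A function on $\overline\Omega$ is real analytic in the closed domain if it extends real analytically to a neighborhood of $\overline\Omega$. *)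

From Stdlib Require Import Reals.
From Coquelicot Require Import Coquelicot.
Open Scope R_scope.

(** Open sets (sup-distance balls; same topology as the Euclidean one). *)
Definition open2 (U : R -> R -> Prop) : Prop :=
  forall x y, U x y -> exists e, 0 < e /\
    forall x' y', Rabs (x' - x) < e -> Rabs (y' - y) < e -> U x' y'.

Definition open3 (U : R -> R -> R -> Prop) : Prop :=
  forall x y t, U x y t -> exists e, 0 < e /\
    forall x' y' t', Rabs (x' - x) < e -> Rabs (y' - y) < e ->
      Rabs (t' - t) < e -> U x' y' t'.

Definition closure2 (S : R -> R -> Prop) (x y : R) : Prop :=
  forall e, 0 < e -> exists x' y', S x' y' /\ Rabs (x' - x) < e /\ Rabs (y' - y) < e.

Definition boundary2 (S : R -> R -> Prop) (x y : R) : Prop :=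
  closure2 S x y /\ ~ S x y.

Definition bounded2 (S : R -> R -> Prop) : Prop :=
  exists M, forall x y, S x y -> Rabs x <= M /\ Rabs y <= M.

Definition analytic1 (g : R -> R) : Prop :=
  forall a, exists (c : nat -> R) (r : R), 0 < r /\
    forall x, Rabs (x - a) < r ->
      is_lim_seq (fun N => sum_f_R0 (fun i => c i * (x - a) ^ i) N) (g x).

Definition psum2 (c : nat -> nat -> R) (h k : R) (N : nat) : R :=
  sum_f_R0 (fun i => sum_f_R0 (fun j => c i j * h ^ i * k ^ j) N) N.

Definition analytic2_on (U : R -> R -> Prop) (g : R -> R -> R) : Prop :=
  forall a b, U a b -> exists (c : nat -> nat -> R) (r : R), 0 < r /\
    (exists M, forall N, psum2 (fun i j => Rabs (c i j)) r r N <= M) /\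
    forall x y, Rabs (x - a) < r -> Rabs (y - b) < r ->
      is_lim_seq (psum2 c (x - a) (y - b)) (g x y).

Definition psum3 (c : nat -> nat -> nat -> R) (h k l : R) (N : nat) : R :=
  sum_f_R0 (fun i => sum_f_R0 (fun j => sum_f_R0 (fun m =>
     c i j m * h ^ i * k ^ j * l ^ m) N) N) N.

Definition analytic3_on (U : R -> R -> R -> Prop) (g : R -> R -> R -> R) : Prop :=
  forall a b d, U a b d -> exists (c : nat -> nat -> nat -> R) (r : R), 0 < r /\
    (exists M, forall N, psum3 (fun i j m => Rabs (c i j m)) r r r N <= M) /\
    forall x y t, Rabs (x - a) < r -> Rabs (y - b) < r -> Rabs (t - d) < r ->
      is_lim_seq (psum3 c (x - a) (y - b) (t - d)) (g x y t).

Definition D1 (f : R -> R -> R) : R -> R -> R := fun x y => Derive (fun u => f u y) x.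
Definition D2 (f : R -> R -> R) : R -> R -> R := fun x y => Derive (fun v => f x v) y.

Definition fxx f := D1 (D1 f).
Definition fxy f := D2 (D1 f).
Definition fyy f := D2 (D2 f).

Definition path_avoiding (C : R -> R -> Prop) (px py qx qy : R) : Prop :=
  exists p1 p2 : R -> R,
    p1 0 = px /\ p2 0 = py /\ p1 1 = qx /\ p2 1 = qy /\
    (forall s, 0 <= s <= 1 -> continuity_pt p1 s /\ continuity_pt p2 s) /\
    (forall s, 0 <= s <= 1 -> ~ C (p1 s) (p2 s)).

(** Jordan domain with analytic boundary: the bounded (path-)component of the
    complement of the image of a periodic, injective-on-a-period, real analytic
    map R -> R^2 with nowhere vanishing derivative. *)
Definition jordan_analytic_domain (Om : R -> R -> Prop) : Prop :=
  exists (g1 g2 : R -> R) (T : R),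
    0 < T /\ analytic1 g1 /\ analytic1 g2 /\
    (forall s, g1 (s + T) = g1 s /\ g2 (s + T) = g2 s) /\
    (forall s s', 0 <= s < T -> 0 <= s' < T ->
        g1 s = g1 s' -> g2 s = g2 s' -> s = s') /\
    (forall s, Derive g1 s <> 0 \/ Derive g2 s <> 0) /\
    let Gam := fun x y => exists s, x = g1 s /\ y = g2 s in
    (exists x y, Om x y) /\
    bounded2 Om /\
    (forall x y, Om x y -> ~ Gam x y) /\
    (forall x y x' y', Om x y ->
        (Om x' y' <-> (~ Gam x' y' /\ path_avoiding Gam x y x' y'))).

Definition analytic2_near (K : R -> R -> Prop) (g : R -> R -> R) : Prop :=
  exists U, open2 U /\ (forall x y, K x y -> U x y) /\ analytic2_on U g.

Definition analytic3_near (K : R -> R -> R -> Prop) (g : R -> R -> R -> R) : Prop :=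
  exists U, open3 U /\ (forall x y t, K x y t -> U x y t) /\ analytic3_on U g.

Definition slice (f : R -> R -> R -> R) (t : R) : R -> R -> R := fun x y => f x y t.

Definition admissible_family (Om : R -> R -> Prop) (f0 : R -> R -> R) (eps : R)
    (f : R -> R -> R -> R) : Prop :=
  analytic3_near (fun x y t => closure2 Om x y /\ -eps <= t <= eps) f /\
  (forall x y t, Om x y -> -eps <= t <= eps ->
     0 <= (fxy (slice f t) x y) ^ 2 - fxx (slice f t) x y * fyy (slice f t) x y /\
     fxx (slice f t) x y + fyy (slice f t) x y =
       t * sqrt ((fxy (slice f t) x y) ^ 2 - fxx (slice f t) x y * fyy (slice f t) x y)) /\
  (forall x y, closure2 Om x y -> f x y 0 = f0 x y) /\
  (forall x y t, boundary2 Om x y -> -eps <= t <= eps -> f x y t = f0 x y).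

(* Fix t. The slices of f and g at time t solve F(D^2 u) = 0 with
   F(a, b, c) = a + c - t sqrt (b^2 - a c) and agree on the boundary. Squared out, the equation
   reads (a + c) sqrt (4 + t^2) = t |(a - c, 2 b)|, and since |t| < sqrt (4 + t^2), F is strictly
   elliptic: if the Hessian of g exceeds that of f by a positive semidefinite matrix, the trace
   of the excess is nonpositive. Hence f + d (x^2 + y^2) - g (d > 0) has no interior maximum on
   the compact closure, so its maximum is attained on the boundary, where f = g. Letting d -> 0
   gives f <= g, and f = g by symmetry. Analyticity only serves to differentiate the power series
   termwise, which yields the second derivatives of the slices and their continuity. *)

From Stdlib Require Import Reals Lra Psatz Lia ClassicalEpsilon Classical.
From Coquelicot Require Import Coquelicot.
Open Scope R_scope.

Definition solves_pde (t a b c : R) : Prop :=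
  0 <= b ^ 2 - a * c /\ a + c = t * sqrt (b ^ 2 - a * c).

Lemma Rabs_Cmod_sub_le (u v : C) : Rabs (Cmod (u + v) - Cmod u) <= Cmod v.
Proof.
  pose proof (Cmod_triangle u v) as Huv.
  pose proof (Cmod_triangle (u + v) (- v)) as Hu.
  replace (u + v + - v)%C with u in Hu by ring.
  rewrite Cmod_opp in Hu.
  apply Rabs_le; lra.
Qed.

Lemma Rabs_lt_sqrt_4_plus_sqr (t : R) : Rabs t < sqrt (4 + t ^ 2).
Proof.
  rewrite <- sqrt_Rsqr_abs. apply sqrt_lt_1_alt. split.
  - apply Rle_0_sqr.
  - unfold Rsqr. lra.
Qed.

(* Squaring [a + c = t s] with [s^2 = b^2 - ac] gives [(a + c)^2 (4 + t^2) = t^2 ((a - c)^2 + 4 b^2)]. *)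
Lemma solves_pde_Cmod t a b c :
  solves_pde t a b c -> (a + c) * sqrt (4 + t ^ 2) = t * Cmod (a - c, 2 * b).
Proof.
  intros [Hdisc Heq]. unfold Cmod; cbn [fst snd].
  set (s := sqrt (b ^ 2 - a * c)) in *.
  assert (Hs : 0 <= s) by apply sqrt_pos.
  assert (Hs2 : s * s = b ^ 2 - a * c) by (apply sqrt_sqrt; lra).
  replace ((a - c) ^ 2 + (2 * b) ^ 2) with ((s * sqrt (4 + t ^ 2)) ^ 2).
  - rewrite sqrt_pow2, Heq by (apply Rmult_le_pos; [exact Hs | apply sqrt_pos]). ring.
  - rewrite Rpow_mult_distr, pow2_sqrt by nra.
    replace ((a - c) ^ 2 + (2 * b) ^ 2) with ((a + c) ^ 2 + 4 * (b ^ 2 - a * c)) by ring.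
    rewrite Heq, <- Hs2. ring.
Qed.

(* Strict ellipticity: [(a + c) sqrt (4 + t^2) - t |(a - c, 2b)|] is strictly increasing
   in the positive semidefinite direction, since [|t| < sqrt (4 + t^2)] while the norm
   term is 1-Lipschitz and [|(p - r, 2q)| <= p + r] for a semidefinite increment. *)
Lemma psd_increment_trace_nonpos t a b c p q r :
  solves_pde t a b c -> solves_pde t (a + p) (b + q) (c + r) ->
  0 <= p -> 0 <= r -> q ^ 2 <= p * r -> p + r <= 0.
Proof.
  intros E1 E2 Hp Hr Hq.
  pose proof (solves_pde_Cmod _ _ _ _ E1) as F1.
  pose proof (solves_pde_Cmod _ _ _ _ E2) as F2.
  pose proof (Rabs_Cmod_sub_le (a - c, 2 * b) (p - r, 2 * q)) as Hlip.
  replace (Cplus (a - c, 2 * b) (p - r, 2 * q)) with (a + p - (c + r), 2 * (b + q)) in Hlip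
    by (unfold Cplus; cbn [fst snd]; f_equal; ring).
  assert (Hpsd : Cmod (p - r, 2 * q) <= p + r).
  { unfold Cmod; cbn [fst snd]. rewrite <- (sqrt_pow2 (p + r)) by lra. apply sqrt_le_1_alt. nra. }
  pose proof (Rabs_lt_sqrt_4_plus_sqr t) as Ht.
  set (K := sqrt (4 + t ^ 2)) in *.
  set (u := Cmod (a - c, 2 * b)) in *.
  set (w := Cmod (a + p - (c + r), 2 * (b + q))) in *.
  assert (Hd : (p + r) * K = t * (w - u)) by lra.
  assert (t * (w - u) <= Rabs t * (p + r)).
  { apply Rle_trans with (Rabs (t * (w - u))); [apply Rle_abs |].
    rewrite Rabs_mult. apply Rmult_le_compat_l; [apply Rabs_pos | lra]. }
  pose proof (Rabs_pos t). nra.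
Qed.

Lemma is_derive_value (f : R -> R) (x l l' : R) :
  is_derive f x l -> l = l' -> is_derive f x l'.
Proof. intros H <-; exact H. Qed.

(* Coquelicot's rules restated with [Rplus], [Rmult], ... so that [apply] unifies them with
   real expressions, which the generic [plus], [mult], ... versions do not. *)
Lemma is_derive_Rconst (c x : R) : is_derive (fun _ => c) x 0.
Proof. apply (is_derive_const c x). Qed.

Lemma is_derive_Rplus (f g : R -> R) (x a b : R) :
  is_derive f x a -> is_derive g x b -> is_derive (fun s => f s + g s) x (a + b).
Proof. intros. apply (is_derive_plus f g); auto. Qed.

Lemma is_derive_Rminus (f g : R -> R) (x a b : R) :
  is_derive f x a -> is_derive g x b -> is_derive (fun s => f s - g s) x (a - b).
Proof. intros. apply (is_derive_minus f g); auto. Qed.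

Lemma is_derive_Rmult (f g : R -> R) (x a b : R) :
  is_derive f x a -> is_derive g x b -> is_derive (fun s => f s * g s) x (a * g x + f x * b).
Proof. intros. apply (is_derive_mult f g); auto. apply Rmult_comm. Qed.

Lemma is_derive_Rcomp (f g : R -> R) (x a b : R) :
  is_derive f (g x) a -> is_derive g x b -> is_derive (fun s => f (g s)) x (b * a).
Proof. intros. apply (is_derive_comp f g); auto. Qed.

Lemma is_derive_affine (h v x : R) : is_derive (fun s => h + s * v) x v.
Proof.
  apply is_derive_value with (0 + (1 * v + x * 0)); [| ring].
  apply is_derive_Rplus; [apply is_derive_Rconst |].
  apply is_derive_Rmult; [apply (is_derive_id x) | apply is_derive_Rconst].
Qed.

Lemma is_derive_affine_ext (h v : R) (f : R -> R) x :
  (forall s, h + s * v = f s) -> is_derive f x v.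
Proof. intros H. apply (is_derive_ext _ _ _ _ H), is_derive_affine. Qed.

Lemma is_derive_sum_f_R0 (f f' : nat -> R -> R) (x : R) N :
  (forall i, (i <= N)%nat -> is_derive (f i) x (f' i x)) ->
  is_derive (fun s => sum_f_R0 (fun i => f i s) N) x (sum_f_R0 (fun i => f' i x) N).
Proof.
  induction N as [| N IH]; intros H; simpl.
  - apply H; lia.
  - apply is_derive_Rplus; [apply IH; intros; apply H |apply H]; lia.
Qed.

Lemma is_derive_of_shift (F : R -> R) (u L : R) :
  is_derive (fun s => F (u + s)) 0 L -> is_derive F u L.
Proof.
  intros H.
  apply (is_derive_ext (fun w => F (u + (w - u)))); [intros w; f_equal; ring |].
  apply is_derive_value with (1 * L); [| ring].
  apply (is_derive_Rcomp (fun s => F (u + s)) (fun w => w - u)).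
  - replace (u - u) with 0 by ring. exact H.
  - apply is_derive_value with (1 - 0); [| ring].
    apply is_derive_Rminus; [apply (is_derive_id u) | apply is_derive_Rconst].
Qed.

(* [dpow p i] is the [p]-th derivative of [h ^ i]; for [p > i] it vanishes through the factor
   [falling i p], not through the truncated exponent [i - p]. *)
Fixpoint falling (i p : nat) : R :=
  match p with O => 1 | S p' => falling i p' * INR (i - p') end.

Definition dpow (p i : nat) (h : R) : R := falling i p * h ^ (i - p).

Lemma falling_ge0 i p : 0 <= falling i p.
Proof.
  induction p; simpl; [lra |]. apply Rmult_le_pos; [assumption | apply pos_INR].
Qed.

Lemma falling_le_pow i p : falling i p <= (INR i + 1) ^ p.
Proof.
  induction p as [| p IH]; simpl; [lra |].
  rewrite (Rmult_comm (INR i + 1)).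
  apply Rmult_le_compat; [apply falling_ge0 | apply pos_INR | exact IH |].
  assert (INR (i - p) <= INR i) by (apply le_INR; lia). lra.
Qed.

Lemma falling_eq0 i p : (i < p)%nat -> falling i p = 0.
Proof.
  induction p; intros H; [lia |]. simpl.
  replace (i - p)%nat with 0%nat by lia. simpl. ring.
Qed.

Lemma is_derive_dpow p i x : is_derive (dpow p i) x (dpow (S p) i x).
Proof.
  unfold dpow; simpl.
  apply is_derive_value with (falling i p * (INR (i - p) * 1 * x ^ Nat.pred (i - p))).
  - apply is_derive_scal, is_derive_pow, (is_derive_id x).
  - replace (Nat.pred (i - p)) with (i - S p)%nat by lia. ring.
Qed.

Lemma is_derive_dpow_affine p i h v s0 :
  is_derive (fun s => dpow p i (h + s * v)) s0 (v * dpow (S p) i (h + s0 * v)).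
Proof. apply is_derive_Rcomp; [apply is_derive_dpow | apply is_derive_affine]. Qed.

Lemma Rabs_dpow_le p i h rho :
  Rabs h <= rho -> Rabs (dpow p i h) <= falling i p * rho ^ (i - p).
Proof.
  intros H. unfold dpow.
  rewrite Rabs_mult, Rabs_right by (apply Rle_ge, falling_ge0).
  apply Rmult_le_compat_l; [apply falling_ge0 |].
  rewrite <- RPow_abs. apply pow_incr. split; [apply Rabs_pos | exact H].
Qed.

Lemma Rabs_plus_Rabs_plus1_pos (v1 v2 : R) : 0 < Rabs v1 + Rabs v2 + 1.
Proof. pose proof (Rabs_pos v1). pose proof (Rabs_pos v2). lra. Qed.

Lemma Rabs_mult_lt_of_small (e s v1 v2 : R) : Rabs s < e / (Rabs v1 + Rabs v2 + 1) ->
  Rabs (s * v1) < e /\ Rabs (s * v2) < e.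
Proof.
  intros Hs. pose proof (Rabs_plus_Rabs_plus1_pos v1 v2) as Hd.
  pose proof (Rabs_pos v1). pose proof (Rabs_pos v2). pose proof (Rabs_pos s).
  assert (Hs1 : Rabs s * (Rabs v1 + Rabs v2 + 1) < e).
  { apply Rmult_lt_reg_r with (/ (Rabs v1 + Rabs v2 + 1)); [apply Rinv_0_lt_compat; lra |].
    rewrite Rmult_assoc, Rinv_r by lra. unfold Rdiv in Hs. lra. }
  rewrite !Rabs_mult. split; nra.
Qed.

Definition sum2 (F : nat -> nat -> R) (N : nat) : R :=
  sum_f_R0 (fun i => sum_f_R0 (fun j => F i j) N) N.

Lemma sum2_S F N : sum2 F (S N) =
  sum2 F N + sum_f_R0 (fun i => F i (S N)) N + sum_f_R0 (fun j => F (S N) j) (S N).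
Proof.
  unfold sum2. rewrite tech5.
  rewrite (sum_eq (fun i => sum_f_R0 (fun j => F i j) (S N))
                  (fun i => sum_f_R0 (fun j => F i j) N + F i (S N)))
    by (intros; apply tech5).
  rewrite plus_sum. ring.
Qed.

Lemma sum_f_R0_abs_le (F B : nat -> R) N :
  (forall i, Rabs (F i) <= B i) -> Rabs (sum_f_R0 F N) <= sum_f_R0 B N.
Proof.
  intros H. eapply Rle_trans; [apply sum_f_R0_triangle |]. apply sum_Rle; auto.
Qed.

Lemma sum_f_R0_term_le (f : nat -> R) N i :
  (forall k, 0 <= f k) -> (i <= N)%nat -> f i <= sum_f_R0 f N.
Proof.
  intros H Hi. induction N as [| N IH].
  - replace i with 0%nat by lia. simpl; lra.
  - simpl. pose proof (H (S N)).
    destruct (Nat.eq_dec i (S N)) as [-> | Hne].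
    + pose proof (cond_pos_sum f N H). lra.
    + assert (f i <= sum_f_R0 f N) by (apply IH; lia). lra.
Qed.

Lemma sum2_abs_le F B N :
  (forall i j, Rabs (F i j) <= B i j) -> Rabs (sum2 F N) <= sum2 B N.
Proof.
  intros H. unfold sum2. apply sum_f_R0_abs_le. intros. apply sum_f_R0_abs_le. auto.
Qed.

Lemma sum2_nondecreasing B : (forall i j, 0 <= B i j) -> Un_growing (sum2 B).
Proof.
  intros H N. rewrite sum2_S.
  pose proof (cond_pos_sum (fun i => B i (S N)) N (fun i => H i (S N))).
  pose proof (cond_pos_sum (fun j => B (S N) j) (S N) (H (S N))).
  lra.
Qed.

Lemma sum2_cauchy_le F B : (forall i j, Rabs (F i j) <= B i j) ->
  forall N n, (N <= n)%nat -> Rabs (sum2 F n - sum2 F N) <= sum2 B n - sum2 B N.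
Proof.
  intros H N n Hn. induction Hn as [| m Hm IH].
  - rewrite !Rminus_diag, Rabs_R0. lra.
  - rewrite !sum2_S.
    pose proof (sum_f_R0_abs_le (fun i => F i (S m)) (fun i => B i (S m)) m
                  (fun i => H i (S m))) as H1.
    pose proof (sum_f_R0_abs_le (fun j => F (S m) j) (fun j => B (S m) j) (S m)
                  (H (S m))) as H2.
    pose proof (Rabs_triang (sum2 F m - sum2 F N) (sum_f_R0 (fun i => F i (S m)) m)) as H3.
    pose proof (Rabs_triang (sum2 F m - sum2 F N + sum_f_R0 (fun i => F i (S m)) m)
                  (sum_f_R0 (fun j => F (S m) j) (S m))) as H4.
    replace (sum2 F m + sum_f_R0 (fun i => F i (S m)) m
               + sum_f_R0 (fun j => F (S m) j) (S m) - sum2 F N)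
      with (sum2 F m - sum2 F N + sum_f_R0 (fun i => F i (S m)) m
               + sum_f_R0 (fun j => F (S m) j) (S m)) by ring.
    lra.
Qed.

Lemma sum2_term_le F N i j :
  (forall a b, 0 <= F a b) -> (i <= N)%nat -> (j <= N)%nat -> F i j <= sum2 F N.
Proof.
  intros H Hi Hj. unfold sum2.
  apply Rle_trans with (sum_f_R0 (fun j => F i j) N).
  - apply (sum_f_R0_term_le (fun j => F i j)); auto.
  - apply (sum_f_R0_term_le (fun i => sum_f_R0 (fun j => F i j) N)); auto.
    intros; apply cond_pos_sum; auto.
Qed.

Lemma sum2_plus_scal F G a b N :
  sum2 (fun i j => a * F i j + b * G i j) N = a * sum2 F N + b * sum2 G N.
Proof.
  assert (Hlin : forall f g : nat -> R, sum_f_R0 (fun i => a * f i + b * g i) N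
                   = a * sum_f_R0 f N + b * sum_f_R0 g N).
  { intros f g. rewrite plus_sum, !scal_sum. f_equal; apply sum_eq; intros; ring. }
  unfold sum2. rewrite <- Hlin. apply sum_eq. intros. apply Hlin.
Qed.

Lemma sum2_scal_prod (a b : nat -> R) M N :
  sum2 (fun i j => M * a i * b j) N = M * sum_f_R0 a N * sum_f_R0 b N.
Proof.
  unfold sum2.
  transitivity (sum_f_R0 (fun i => a i * (M * sum_f_R0 b N)) N).
  - apply sum_eq. intros i _. rewrite <- Rmult_assoc, scal_sum. apply sum_eq. intros; ring.
  - rewrite <- scal_sum. ring.
Qed.

Lemma is_lim_seq_le_eventually (u : nat -> R) (l c : R) N :
  is_lim_seq u l -> (forall n, (N <= n)%nat -> u n <= c) -> l <= c.
Proof.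
  intros Hl H.
  apply (is_lim_seq_le_loc u (fun _ => c) l c); [exists N; auto | exact Hl |].
  apply is_lim_seq_const.
Qed.

Lemma is_lim_seq_ge_eventually (u : nat -> R) (l c : R) N :
  is_lim_seq u l -> (forall n, (N <= n)%nat -> c <= u n) -> c <= l.
Proof.
  intros Hl H.
  apply (is_lim_seq_le_loc (fun _ => c) u c l); [exists N; auto | | exact Hl].
  apply is_lim_seq_const.
Qed.

(* Junk value [0] when [u] has no finite limit. *)
Definition Lim_seq_R (u : nat -> R) : R := real (Lim_seq u).

Lemma Lim_seq_R_correct (u : nat -> R) (l : R) : is_lim_seq u l -> Lim_seq_R u = l.
Proof. intros H. unfold Lim_seq_R. rewrite (is_lim_seq_unique u l H). reflexivity. Qed.

Lemma sum2_dominated_tail F B (l : R) :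
  (forall i j, Rabs (F i j) <= B i j) -> (forall i j, 0 <= B i j) -> is_lim_seq (sum2 B) l ->
  forall N n, (N <= n)%nat -> Rabs (sum2 F n - sum2 F N) <= l - sum2 B N.
Proof.
  intros HF HB Hl N n Hn.
  assert (sum2 B n <= l).
  { apply (is_lim_seq_ge_eventually _ _ _ n Hl). intros m Hm.
    apply Rge_le, growing_prop; [apply sum2_nondecreasing, HB | exact Hm]. }
  pose proof (sum2_cauchy_le F B HF N n Hn). lra.
Qed.

Lemma sum2_dominated_cvg F B (l : R) :
  (forall i j, Rabs (F i j) <= B i j) -> (forall i j, 0 <= B i j) -> is_lim_seq (sum2 B) l ->
  is_lim_seq (sum2 F) (Lim_seq_R (sum2 F)).
Proof.
  intros HF HB Hl.
  assert (Hex : ex_finite_lim_seq (sum2 F)).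
  { apply ex_lim_seq_cauchy_corr. intros eps.
    pose proof (cond_pos eps).
    destruct (proj1 (is_lim_seq_Reals _ _) Hl (eps / 2)) as [N HN]; [lra |].
    exists N. intros n m Hn Hm.
    pose proof (sum2_dominated_tail F B l HF HB Hl N n Hn).
    pose proof (sum2_dominated_tail F B l HF HB Hl N m Hm).
    specialize (HN N (le_n N)). unfold R_dist in HN. apply Rabs_def2 in HN.
    replace (sum2 F n - sum2 F m) with ((sum2 F n - sum2 F N) - (sum2 F m - sum2 F N)) by ring.
    eapply Rle_lt_trans; [apply Rabs_triang |]. rewrite Rabs_Ropp. lra. }
  destruct Hex as [la Hla]. rewrite (Lim_seq_R_correct _ _ Hla). exact Hla.
Qed.

Lemma sum2_weierstrass {X : Type} (Dom : X -> Prop) (F : X -> nat -> nat -> R)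
  (B : nat -> nat -> R) (L : R) :
  (forall i j, 0 <= B i j) ->
  (forall x i j, Dom x -> Rabs (F x i j) <= B i j) ->
  (forall N, sum2 B N <= L) ->
  (forall x, Dom x -> is_lim_seq (sum2 (F x)) (Lim_seq_R (sum2 (F x)))) /\
  (forall eps, 0 < eps -> exists N, forall n x, (N <= n)%nat -> Dom x ->
      Rabs (Lim_seq_R (sum2 (F x)) - sum2 (F x) n) < eps) /\
  (forall x, Dom x -> Rabs (Lim_seq_R (sum2 (F x))) <= L).
Proof.
  intros HB HF HL.
  destruct (ex_finite_lim_seq_incr (sum2 B) L (sum2_nondecreasing B HB) HL) as [l Hl].
  assert (Hlim : forall x, Dom x -> is_lim_seq (sum2 (F x)) (Lim_seq_R (sum2 (F x))))
    by (intros x Hx; apply (sum2_dominated_cvg (F x) B l); auto).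
  split; [exact Hlim | split].
  - intros eps Heps.
    destruct (proj1 (is_lim_seq_Reals _ _) Hl (eps / 2)) as [N HN]; [lra |].
    exists N. intros n x Hn Hx.
    assert (Rabs (Lim_seq_R (sum2 (F x)) - sum2 (F x) n) <= l - sum2 B n).
    { pose proof (is_lim_seq_abs _ _ (is_lim_seq_minus _ _ _ _ _ (Hlim x Hx)
         (is_lim_seq_const (sum2 (F x) n)) eq_refl)) as Hd.
      simpl in Hd. apply (is_lim_seq_le_eventually _ _ _ n Hd). intros m Hm.
      apply (sum2_dominated_tail (F x) B l); auto. }
    specialize (HN n Hn). unfold R_dist in HN. apply Rabs_def2 in HN. lra.
  - intros x Hx.
    apply (is_lim_seq_le_eventually _ _ _ 0 (is_lim_seq_abs _ _ (Hlim x Hx))).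
    intros n _. eapply Rle_trans; [apply sum2_abs_le; intros; apply HF; auto | apply HL].
Qed.

Lemma CVU_lin (u1 u2 : nat -> R -> R) (l1 l2 : R -> R) v1 v2 c d :
  CVU u1 l1 c d -> CVU u2 l2 c d ->
  CVU (fun n s => v1 * u1 n s + v2 * u2 n s) (fun s => v1 * l1 s + v2 * l2 s) c d.
Proof.
  intros H1 H2 eps He. pose proof (Rabs_plus_Rabs_plus1_pos v1 v2) as Hv.
  set (e := eps / (Rabs v1 + Rabs v2 + 1)).
  assert (He' : 0 < e) by (apply Rdiv_lt_0_compat; lra).
  destruct (H1 e He') as [N1 HN1]. destruct (H2 e He') as [N2 HN2].
  exists (max N1 N2). intros n s Hn Hs.
  specialize (HN1 n s ltac:(lia) Hs). specialize (HN2 n s ltac:(lia) Hs).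
  replace (v1 * l1 s + v2 * l2 s - (v1 * u1 n s + v2 * u2 n s))
    with (v1 * (l1 s - u1 n s) + v2 * (l2 s - u2 n s)) by ring.
  eapply Rle_lt_trans; [apply Rabs_triang |]. rewrite !Rabs_mult.
  pose proof (Rabs_pos v1). pose proof (Rabs_pos v2).
  assert (Rabs v1 * Rabs (l1 s - u1 n s) <= Rabs v1 * e) by (apply Rmult_le_compat_l; lra).
  assert (Rabs v2 * Rabs (l2 s - u2 n s) <= Rabs v2 * e) by (apply Rmult_le_compat_l; lra).
  assert (eps = e * (Rabs v1 + Rabs v2 + 1)) by (unfold e; field; lra).
  nra.
Qed.

Lemma is_lim_seq_succ_ratio : is_lim_seq (fun n => (INR n + 2) / (INR n + 1)) 1.
Proof.
  apply is_lim_seq_ext with (fun n => 1 + / INR (S n)).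
  { intros n. rewrite S_INR. pose proof (pos_INR n). field. lra. }
  replace (Finite 1) with (Finite (1 + 0)) by (f_equal; ring).
  apply is_lim_seq_plus'; [apply is_lim_seq_const |].
  replace (Finite 0) with (Rbar_inv p_infty) by reflexivity.
  apply is_lim_seq_inv; [| discriminate].
  apply (is_lim_seq_incr_1 INR p_infty). apply is_lim_seq_INR.
Qed.

Lemma sum_falling_geom_bounded p : exists C, forall N,
  sum_f_R0 (fun i => falling i p * (3 / 4) ^ i) N <= C.
Proof.
  set (a := fun n => (INR n + 1) ^ p * (3 / 4) ^ n).
  assert (Hpos : forall n, 0 < a n).
  { intros n. unfold a. pose proof (pos_INR n).
    apply Rmult_lt_0_compat; apply pow_lt; lra. }
  assert (Hratio : is_lim_seq (fun n => ((INR n + 2) / (INR n + 1)) ^ p * (3 / 4))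
                     (1 ^ p * (3 / 4))).
  { apply is_lim_seq_mult'; [| apply is_lim_seq_const].
    clear a Hpos. induction p as [| p IH]; simpl; [apply is_lim_seq_const |].
    apply is_lim_seq_mult'; [apply is_lim_seq_succ_ratio | exact IH]. }
  rewrite pow1, Rmult_1_l in Hratio.
  destruct (ex_series_DAlembert a (3 / 4)) as [l Hl]; [lra | intros n; specialize (Hpos n); lra | |].
  { apply is_lim_seq_ext with (2 := Hratio). intros n. unfold a.
    rewrite Rabs_right by (apply Rle_ge, Rlt_le, Rdiv_lt_0_compat; apply Hpos).
    rewrite S_INR. pose proof (pos_INR n).
    replace (INR n + 1 + 1) with (INR n + 2) by ring.
    unfold Rdiv. rewrite Rpow_mult_distr, pow_inv. simpl (_ ^ S n).
    field. split; apply pow_nonzero; lra. }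
  exists l. intros N.
  apply (is_lim_seq_ge_eventually (sum_n (fun n => Rabs (a n))) l _ N Hl). intros n Hn.
  rewrite sum_n_Reals.
  apply Rle_trans with (sum_f_R0 (fun n => Rabs (a n)) N).
  - apply sum_Rle. intros i _. rewrite Rabs_right by (apply Rle_ge, Rlt_le, Hpos).
    apply Rmult_le_compat_r; [apply pow_le; lra | apply falling_le_pow].
  - apply Rge_le, growing_prop; [| exact Hn].
    intros m. simpl. pose proof (Rabs_pos (a (S m))). lra.
Qed.

Section DerivedSeries.

Variable c : nat -> nat -> R.
Variables r M : R.
Hypothesis r_pos : 0 < r.
Hypothesis abs_sum_le : forall N, sum2 (fun i j => Rabs (c i j) * r ^ i * r ^ j) N <= M.

Definition dterm p q h k i j := c i j * dpow p i h * dpow q j k.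
Definition dseries p q h k := Lim_seq_R (sum2 (dterm p q h k)).

(* On the box [|h|, |k| <= 3r/4] the derived series are dominated by the summable
   [M * weight p i * weight q j] (the geometric factor [(3/4)^i] beats [falling i p]). *)
Let rho := 3 * r / 4.

Lemma coef_bound i j : Rabs (c i j) * r ^ i * r ^ j <= M.
Proof.
  eapply Rle_trans; [| apply (abs_sum_le (max i j))].
  apply (sum2_term_le (fun i j => Rabs (c i j) * r ^ i * r ^ j)); [| lia | lia].
  intros. repeat apply Rmult_le_pos; try apply Rabs_pos; apply pow_le; lra.
Qed.

Lemma coef_bound_ge0 : 0 <= M.
Proof.
  eapply Rle_trans; [| apply (coef_bound 0 0)]. simpl. rewrite !Rmult_1_r. apply Rabs_pos.
Qed.

Definition weight p i := falling i p * (3 / 4) ^ i / rho ^ p.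

Lemma weight_ge0 p i : 0 <= weight p i.
Proof.
  unfold weight. apply Rmult_le_pos; [apply Rmult_le_pos; [apply falling_ge0 | apply pow_le; lra] |].
  apply Rlt_le, Rinv_0_lt_compat, pow_lt. unfold rho; lra.
Qed.

Lemma Rabs_dpow_le_weight p i h : Rabs h <= rho -> Rabs (dpow p i h) <= weight p i * r ^ i.
Proof.
  intros H. eapply Rle_trans; [apply (Rabs_dpow_le p i h rho H) |].
  unfold weight. assert (Hrho : 0 < rho) by (unfold rho; lra).
  destruct (Compare_dec.le_lt_dec p i) as [Hpi | Hpi].
  - assert (Hsplit : rho ^ (i - p) * rho ^ p = (3 / 4) ^ i * r ^ i).
    { rewrite <- pow_add, <- Rpow_mult_distr. replace (i - p + p)%nat with i by lia.
      unfold rho. f_equal. field. }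
    pose proof (pow_lt rho p Hrho).
    right. apply Rmult_eq_reg_r with (rho ^ p); [| lra].
    rewrite Rmult_assoc, Hsplit. field. lra.
  - rewrite falling_eq0 by exact Hpi. lra.
Qed.

Lemma Rabs_dterm_le p q h k i j : Rabs h <= rho -> Rabs k <= rho ->
  Rabs (dterm p q h k i j) <= M * weight p i * weight q j.
Proof.
  intros Hh Hk. unfold dterm. rewrite !Rabs_mult.
  pose proof (Rabs_dpow_le_weight p i h Hh). pose proof (Rabs_dpow_le_weight q j k Hk).
  pose proof (coef_bound i j). pose proof (weight_ge0 p i). pose proof (weight_ge0 q j).
  pose proof (Rabs_pos (c i j)). pose proof (Rabs_pos (dpow p i h)).
  pose proof (Rabs_pos (dpow q j k)). pose proof (pow_le r i (Rlt_le _ _ r_pos)).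
  pose proof (pow_le r j (Rlt_le _ _ r_pos)).
  apply Rle_trans with ((Rabs (c i j) * r ^ i * r ^ j) * weight p i * weight q j).
  - replace (Rabs (c i j) * r ^ i * r ^ j * weight p i * weight q j)
      with (Rabs (c i j) * (weight p i * r ^ i) * (weight q j * r ^ j)) by ring.
    apply Rmult_le_compat; try apply Rmult_le_compat_l; nra.
  - apply Rmult_le_compat_r; [lra |]. apply Rmult_le_compat_r; lra.
Qed.

Lemma sum_weight_bounded p : exists C, forall N, sum_f_R0 (weight p) N <= C.
Proof.
  destruct (sum_falling_geom_bounded p) as [C HC].
  exists (C / rho ^ p). intros N. unfold weight, Rdiv.
  rewrite <- scal_sum, Rmult_comm. apply Rmult_le_compat_r; [| apply HC].
  apply Rlt_le, Rinv_0_lt_compat, pow_lt. unfold rho; lra.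
Qed.

Definition in_box (z : R * R) := Rabs (fst z) <= rho /\ Rabs (snd z) <= rho.

Lemma dseries_unif p q :
  (forall z, in_box z -> is_lim_seq (sum2 (dterm p q (fst z) (snd z))) (dseries p q (fst z) (snd z))) /\
  (forall eps, 0 < eps -> exists N, forall n z, (N <= n)%nat -> in_box z ->
      Rabs (dseries p q (fst z) (snd z) - sum2 (dterm p q (fst z) (snd z)) n) < eps) /\
  (exists L, forall z, in_box z -> Rabs (dseries p q (fst z) (snd z)) <= L).
Proof.
  destruct (sum_weight_bounded p) as [Cp HCp]. destruct (sum_weight_bounded q) as [Cq HCq].
  pose proof coef_bound_ge0.
  assert (Hsp : forall N, 0 <= sum_f_R0 (weight p) N) by (intros; apply cond_pos_sum, weight_ge0).
  assert (Hsq : forall N, 0 <= sum_f_R0 (weight q) N) by (intros; apply cond_pos_sum, weight_ge0).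
  destruct (sum2_weierstrass in_box (fun z => dterm p q (fst z) (snd z))
              (fun i j => M * weight p i * weight q j) (M * Cp * Cq)) as [H1 [H2 H3]].
  - intros. apply Rmult_le_pos; [apply Rmult_le_pos; [exact H |] |]; apply weight_ge0.
  - intros z i j [Hz1 Hz2]. apply Rabs_dterm_le; auto.
  - intros N. rewrite sum2_scal_prod.
    apply Rmult_le_compat; [apply Rmult_le_pos; auto | auto | apply Rmult_le_compat_l; auto | auto].
  - split; [exact H1 | split; [exact H2 |]]. exists (M * Cp * Cq). exact H3.
Qed.

Lemma is_derive_sum2_dterm p q h k v1 v2 n s0 :
  is_derive (fun s => sum2 (dterm p q (h + s * v1) (k + s * v2)) n) s0
    (v1 * sum2 (dterm (S p) q (h + s0 * v1) (k + s0 * v2)) n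
     + v2 * sum2 (dterm p (S q) (h + s0 * v1) (k + s0 * v2)) n).
Proof.
  rewrite <- sum2_plus_scal. unfold sum2.
  set (dt := fun i j s => v1 * dterm (S p) q (h + s * v1) (k + s * v2) i j
                          + v2 * dterm p (S q) (h + s * v1) (k + s * v2) i j).
  apply (is_derive_sum_f_R0 (fun i s => sum_f_R0 (fun j => dterm p q (h + s * v1) (k + s * v2) i j) n)
           (fun i s => sum_f_R0 (fun j => dt i j s) n)).
  intros i _.
  apply (is_derive_sum_f_R0 (fun j s => dterm p q (h + s * v1) (k + s * v2) i j) (dt i)).
  intros j _. unfold dt, dterm.
  eapply is_derive_value.
  - apply is_derive_Rmult; [apply is_derive_Rmult; [apply is_derive_Rconst |] |];
      apply is_derive_dpow_affine.
  - cbv beta. ring.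
Qed.

Lemma is_derive_dseries_affine p q h k v1 v2 : Rabs h < r / 2 -> Rabs k < r / 2 ->
  is_derive (fun s => dseries p q (h + s * v1) (k + s * v2)) 0
    (v1 * dseries (S p) q h k + v2 * dseries p (S q) h k).
Proof.
  intros Hh Hk. pose proof (Rabs_plus_Rabs_plus1_pos v1 v2) as Hv.
  assert (Hd : 0 < (r / 4) / (Rabs v1 + Rabs v2 + 1)) by (apply Rdiv_lt_0_compat; lra).
  set (d := mkposreal _ Hd).
  assert (Hbox : forall s, Boule 0 d s -> in_box (h + s * v1, k + s * v2)).
  { intros s Hs. unfold Boule in Hs. simpl in Hs. rewrite Rminus_0_r in Hs.
    destruct (Rabs_mult_lt_of_small _ _ _ _ Hs) as [Hs1 Hs2].
    unfold in_box, rho; simpl.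
    split; eapply Rle_trans; try apply Rabs_triang; lra. }
  assert (Hcvu : forall p' q', CVU (fun n s => sum2 (dterm p' q' (h + s * v1) (k + s * v2)) n)
                                 (fun s => dseries p' q' (h + s * v1) (k + s * v2)) 0 d).
  { intros p' q' eps He. destruct (dseries_unif p' q') as [_ [U _]].
    destruct (U eps He) as [N HN]. exists N. intros n s Hn Hs.
    apply (HN n (h + s * v1, k + s * v2) Hn (Hbox s Hs)). }
  apply is_derive_Reals.
  replace (v1 * dseries (S p) q h k + v2 * dseries p (S q) h k) with
    (v1 * dseries (S p) q (h + 0 * v1) (k + 0 * v2) + v2 * dseries p (S q) (h + 0 * v1) (k + 0 * v2))
    by (rewrite !Rmult_0_l, !Rplus_0_r; reflexivity).
  apply (CVU_derivable
    (fun n s => sum2 (dterm p q (h + s * v1) (k + s * v2)) n)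
    (fun n s => v1 * sum2 (dterm (S p) q (h + s * v1) (k + s * v2)) n
                + v2 * sum2 (dterm p (S q) (h + s * v1) (k + s * v2)) n)
    (fun s => dseries p q (h + s * v1) (k + s * v2))
    (fun s => v1 * dseries (S p) q (h + s * v1) (k + s * v2)
              + v2 * dseries p (S q) (h + s * v1) (k + s * v2)) 0 d).
  - apply CVU_lin; apply Hcvu.
  - intros s Hs. apply is_lim_seq_Reals.
    destruct (dseries_unif p q) as [Hcv _]. apply (Hcv (h + s * v1, k + s * v2)), Hbox, Hs.
  - intros n s _. apply is_derive_Reals, is_derive_sum2_dterm.
  - unfold Boule; simpl. rewrite Rminus_0_r, Rabs_R0. exact Hd.
Qed.

End DerivedSeries.

Lemma locally_Rabs_lt (x c rho : R) :
  Rabs (x - c) < rho -> locally x (fun u => Rabs (u - c) < rho).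
Proof.
  intros Hx. assert (He : 0 < rho - Rabs (x - c)) by lra.
  exists (mkposreal _ He). intros u Hu. change (Rabs (u - x) < rho - Rabs (x - c)) in Hu.
  replace (u - c) with ((u - x) + (x - c)) by ring.
  eapply Rle_lt_trans; [apply Rabs_triang | lra].
Qed.

(* A local substitute for [C^oo]: a family [A p q] playing the role of [d^(p+q) G / dx^p dy^q],
   specified through derivatives along lines, which is exactly what termwise differentiation
   of a double power series provides. *)
Definition deriv_tower (G : R -> R -> R) (x0 y0 : R) : Prop :=
  exists (A : nat -> nat -> R -> R -> R) (rho : R), 0 < rho /\
  (forall x y, Rabs (x - x0) < rho -> Rabs (y - y0) < rho -> G x y = A 0%nat 0%nat x y) /\
  (forall p q x y v1 v2, Rabs (x - x0) < rho -> Rabs (y - y0) < rho ->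
     is_derive (fun s => A p q (x + s * v1) (y + s * v2)) 0
       (v1 * A (S p) q x y + v2 * A p (S q) x y)) /\
  (forall p q, exists K, forall x y, Rabs (x - x0) < rho -> Rabs (y - y0) < rho ->
     Rabs (A p q x y) <= K).

Lemma deriv_tower_of_series (G : R -> R -> R) x0 y0 (c : nat -> nat -> R) r M :
  0 < r ->
  (forall N, sum2 (fun i j => Rabs (c i j) * r ^ i * r ^ j) N <= M) ->
  (forall x y, Rabs (x - x0) < r -> Rabs (y - y0) < r ->
     is_lim_seq (sum2 (fun i j => c i j * (x - x0) ^ i * (y - y0) ^ j)) (G x y)) ->
  deriv_tower G x0 y0.
Proof.
  intros Hr HM Hc.
  exists (fun p q x y => dseries c p q (x - x0) (y - y0)), (r / 2).
  split; [lra | split; [| split]].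
  - intros x y Hx Hy. symmetry. unfold dseries. apply Lim_seq_R_correct.
    apply is_lim_seq_ext with (2 := Hc x y ltac:(lra) ltac:(lra)). intros N.
    unfold sum2. apply sum_eq. intros i _. apply sum_eq. intros j _.
    unfold dterm, dpow. simpl. rewrite !Nat.sub_0_r. ring.
  - intros p q x y v1 v2 Hx Hy.
    eapply is_derive_ext; [| apply (is_derive_dseries_affine c r M Hr HM p q (x - x0) (y - y0) v1 v2); lra].
    intros s. simpl. f_equal; ring.
  - intros p q. destruct (dseries_unif c r M Hr HM p q) as [_ [_ [L HL]]].
    exists L. intros x y Hx Hy. apply (HL (x - x0, y - y0)). unfold in_box; simpl; split; lra.
Qed.

Section Tower.

Variable G : R -> R -> R.
Variables x0 y0 rho : R.
Variable A : nat -> nat -> R -> R -> R.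
Hypothesis rho_pos : 0 < rho.
Hypothesis G_eq : forall x y, Rabs (x - x0) < rho -> Rabs (y - y0) < rho ->
  G x y = A 0%nat 0%nat x y.
Hypothesis A_line : forall p q x y v1 v2, Rabs (x - x0) < rho -> Rabs (y - y0) < rho ->
  is_derive (fun s => A p q (x + s * v1) (y + s * v2)) 0
    (v1 * A (S p) q x y + v2 * A p (S q) x y).

Lemma is_derive_tower_x p q x y : Rabs (x - x0) < rho -> Rabs (y - y0) < rho ->
  is_derive (fun u => A p q u y) x (A (S p) q x y).
Proof.
  intros Hx Hy. apply is_derive_of_shift.
  eapply is_derive_ext; [| eapply is_derive_value; [apply (A_line p q x y 1 0 Hx Hy) | ring]].
  intros s; simpl; f_equal; ring.
Qed.

Lemma is_derive_tower_y p q x y : Rabs (x - x0) < rho -> Rabs (y - y0) < rho ->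
  is_derive (fun v => A p q x v) y (A p (S q) x y).
Proof.
  intros Hx Hy. apply is_derive_of_shift.
  eapply is_derive_ext; [| eapply is_derive_value; [apply (A_line p q x y 0 1 Hx Hy) | ring]].
  intros s; simpl; f_equal; ring.
Qed.

Lemma D1_tower x y : Rabs (x - x0) < rho -> Rabs (y - y0) < rho -> D1 G x y = A 1%nat 0%nat x y.
Proof.
  intros Hx Hy. unfold D1.
  rewrite (Derive_ext_loc (fun u => G u y) (fun u => A 0%nat 0%nat u y)).
  - apply is_derive_unique, is_derive_tower_x; auto.
  - eapply filter_imp; [| apply (locally_Rabs_lt x x0 rho Hx)]. intros u Hu. apply G_eq; auto.
Qed.

Lemma D2_tower x y : Rabs (x - x0) < rho -> Rabs (y - y0) < rho -> D2 G x y = A 0%nat 1%nat x y.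
Proof.
  intros Hx Hy. unfold D2.
  rewrite (Derive_ext_loc (fun v => G x v) (fun v => A 0%nat 0%nat x v)).
  - apply is_derive_unique, is_derive_tower_y; auto.
  - eapply filter_imp; [| apply (locally_Rabs_lt y y0 rho Hy)]. intros v Hv. apply G_eq; auto.
Qed.

Lemma fxx_tower x y : Rabs (x - x0) < rho -> Rabs (y - y0) < rho -> fxx G x y = A 2%nat 0%nat x y.
Proof.
  intros Hx Hy. unfold fxx, D1 at 1.
  rewrite (Derive_ext_loc (fun u => D1 G u y) (fun u => A 1%nat 0%nat u y)).
  - apply is_derive_unique, is_derive_tower_x; auto.
  - eapply filter_imp; [| apply (locally_Rabs_lt x x0 rho Hx)]. intros u Hu. apply D1_tower; auto.
Qed.

Lemma fxy_tower x y : Rabs (x - x0) < rho -> Rabs (y - y0) < rho -> fxy G x y = A 1%nat 1%nat x y.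
Proof.
  intros Hx Hy. unfold fxy, D2 at 1.
  rewrite (Derive_ext_loc (fun v => D1 G x v) (fun v => A 1%nat 0%nat x v)).
  - apply is_derive_unique, is_derive_tower_y; auto.
  - eapply filter_imp; [| apply (locally_Rabs_lt y y0 rho Hy)]. intros v Hv. apply D1_tower; auto.
Qed.

Lemma fyy_tower x y : Rabs (x - x0) < rho -> Rabs (y - y0) < rho -> fyy G x y = A 0%nat 2%nat x y.
Proof.
  intros Hx Hy. unfold fyy, D2 at 1.
  rewrite (Derive_ext_loc (fun v => D2 G x v) (fun v => A 0%nat 1%nat x v)).
  - apply is_derive_unique, is_derive_tower_y; auto.
  - eapply filter_imp; [| apply (locally_Rabs_lt y y0 rho Hy)]. intros v Hv. apply D2_tower; auto.
Qed.

Lemma is_derive_tower_line v1 v2 : exists e, 0 < e /\ forall s, Rabs s < e ->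
  is_derive (fun s => G (x0 + s * v1) (y0 + s * v2)) s
    (v1 * A 1%nat 0%nat (x0 + s * v1) (y0 + s * v2) + v2 * A 0%nat 1%nat (x0 + s * v1) (y0 + s * v2)).
Proof.
  pose proof (Rabs_plus_Rabs_plus1_pos v1 v2).
  exists (rho / (Rabs v1 + Rabs v2 + 1)). split; [apply Rdiv_lt_0_compat; lra |].
  intros s Hs.
  assert (Hnear : forall u, Rabs (u - 0) < rho / (Rabs v1 + Rabs v2 + 1) ->
            Rabs (x0 + u * v1 - x0) < rho /\ Rabs (y0 + u * v2 - y0) < rho).
  { intros u Hu. rewrite Rminus_0_r in Hu.
    replace (x0 + u * v1 - x0) with (u * v1) by ring.
    replace (y0 + u * v2 - y0) with (u * v2) by ring.
    apply Rabs_mult_lt_of_small, Hu. }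
  destruct (Hnear s ltac:(rewrite Rminus_0_r; exact Hs)) as [Hx Hy].
  apply is_derive_ext_loc with (fun s => A 0%nat 0%nat (x0 + s * v1) (y0 + s * v2)).
  - eapply filter_imp; [| apply (locally_Rabs_lt s 0 _ ltac:(rewrite Rminus_0_r; exact Hs))].
    intros u Hu. destruct (Hnear u Hu). symmetry. apply G_eq; auto.
  - apply is_derive_of_shift.
    eapply is_derive_ext; [| apply (A_line 0 0 _ _ v1 v2 Hx Hy)].
    intros t. simpl. f_equal; ring.
Qed.

Lemma is_derive_tower_line2 v1 v2 :
  is_derive (fun s => v1 * A 1%nat 0%nat (x0 + s * v1) (y0 + s * v2)
                      + v2 * A 0%nat 1%nat (x0 + s * v1) (y0 + s * v2)) 0
    (v1 ^ 2 * A 2%nat 0%nat x0 y0 + 2 * v1 * v2 * A 1%nat 1%nat x0 y0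
     + v2 ^ 2 * A 0%nat 2%nat x0 y0).
Proof.
  assert (H0 : Rabs (x0 - x0) < rho) by (rewrite Rminus_diag, Rabs_R0; lra).
  assert (H0' : Rabs (y0 - y0) < rho) by (rewrite Rminus_diag, Rabs_R0; lra).
  eapply is_derive_value.
  - apply is_derive_Rplus; apply is_derive_scal; apply A_line; auto.
  - simpl. ring.
Qed.

Hypothesis A_bounded : forall p q, exists K, forall x y,
  Rabs (x - x0) < rho -> Rabs (y - y0) < rho -> Rabs (A p q x y) <= K.

Lemma tower_continuous : continuity_2d_pt G x0 y0.
Proof.
  intros eps.
  destruct (A_bounded 1 0) as [K1 HK1]. destruct (A_bounded 0 1) as [K2 HK2].
  set (K := Rabs K1 + Rabs K2 + 1).
  pose proof (Rle_abs K1). pose proof (Rle_abs K2).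
  pose proof (Rabs_pos K1). pose proof (Rabs_pos K2). pose proof (cond_pos eps).
  assert (HK : 0 < K) by (unfold K; lra).
  assert (Hd : 0 < Rmin (rho / 2) (eps / (2 * K))).
  { apply Rmin_glb_lt; [lra | apply Rdiv_lt_0_compat; lra]. }
  exists (mkposreal _ Hd). simpl. intros x y Hx Hy.
  pose proof (Rmin_l (rho / 2) (eps / (2 * K))). pose proof (Rmin_r (rho / 2) (eps / (2 * K))).
  assert (H00 : Rabs (x0 - x0) < rho) by (rewrite Rminus_diag, Rabs_R0; lra).
  assert (H00' : Rabs (y0 - y0) < rho) by (rewrite Rminus_diag, Rabs_R0; lra).
  rewrite (G_eq x y), (G_eq x0 y0) by lra.
  assert (Lx : Rabs (A 0%nat 0%nat x y - A 0%nat 0%nat x0 y) <= K * Rabs (x - x0)).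
  { apply (bounded_variation (fun u => A 0%nat 0%nat u y) (fun u => A 1%nat 0%nat u y)).
    intros u Hu. split; [apply is_derive_tower_x; lra |].
    assert (Rabs (A 1%nat 0%nat u y) <= K1) by (apply HK1; lra). unfold K; lra. }
  assert (Ly : Rabs (A 0%nat 0%nat x0 y - A 0%nat 0%nat x0 y0) <= K * Rabs (y - y0)).
  { apply (bounded_variation (fun v => A 0%nat 0%nat x0 v) (fun v => A 0%nat 1%nat x0 v)).
    intros v Hv. split; [apply is_derive_tower_y; lra |].
    assert (Rabs (A 0%nat 1%nat x0 v) <= K2) by (apply HK2; lra). unfold K; lra. }
  replace (A 0%nat 0%nat x y - A 0%nat 0%nat x0 y0)
    with ((A 0%nat 0%nat x y - A 0%nat 0%nat x0 y) + (A 0%nat 0%nat x0 y - A 0%nat 0%nat x0 y0)) by ring.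
  eapply Rle_lt_trans; [apply Rabs_triang |].
  assert (K * Rabs (x - x0) < eps / 2).
  { replace (eps / 2) with (K * (eps / (2 * K))) by (field; lra). apply Rmult_lt_compat_l; lra. }
  assert (K * Rabs (y - y0) < eps / 2).
  { replace (eps / 2) with (K * (eps / (2 * K))) by (field; lra). apply Rmult_lt_compat_l; lra. }
  lra.
Qed.

End Tower.

Lemma second_deriv_nonpos_of_local_max (psi psi' : R -> R) e D : 0 < e ->
  (forall s, Rabs s < e -> is_derive psi s (psi' s)) ->
  is_derive psi' 0 D ->
  (forall s, Rabs s < e -> psi s <= psi 0) -> D <= 0.
Proof.
  intros He Hd Hd2 Hmax.
  assert (Hcrit : psi' 0 = 0).
  { assert (Hd0 : derivable_pt_lim psi 0 (psi' 0))
      by (apply is_derive_Reals, Hd; rewrite Rabs_R0; lra).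
    apply (deriv_maximum psi (-e) e 0 (exist _ (psi' 0) Hd0)); try lra.
    intros x Hx1 Hx2. apply Hmax, Rabs_def1; lra. }
  destruct (Rle_or_lt D 0) as [| HD]; [assumption | exfalso].
  apply is_derive_Reals in Hd2. destruct (Hd2 (D / 2) ltac:(lra)) as [d Hdel].
  pose proof (cond_pos d).
  assert (Hm : 0 < Rmin d e) by (apply Rmin_glb_lt; lra).
  pose proof (Rmin_l d e). pose proof (Rmin_r d e).
  set (s := Rmin d e / 2).
  assert (Hs0 : 0 < s) by (unfold s; lra).
  destruct (MVT_cor2 psi psi' 0 s Hs0) as [c [Hc1 Hc2]].
  { intros c Hc. apply is_derive_Reals, Hd, Rabs_def1; unfold s in *; lra. }
  (* [psi' c > 0] because [psi' (0) = 0] and [psi'' (0) = D > 0]. *)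
  assert (Hpc : 0 < psi' c).
  { specialize (Hdel c ltac:(lra) ltac:(rewrite Rabs_right; unfold s in *; lra)).
    rewrite Rplus_0_l, Hcrit, Rminus_0_r in Hdel. apply Rabs_def2 in Hdel.
    assert (0 < psi' c / c) by lra.
    assert (psi' c = (psi' c / c) * c) by (field; lra). nra. }
  assert (psi s <= psi 0) by (apply Hmax; rewrite Rabs_right; unfold s in *; lra).
  nra.
Qed.

Lemma quadratic_form_nonpos_nsd A B C :
  (forall v1 v2, v1 ^ 2 * A + 2 * v1 * v2 * B + v2 ^ 2 * C <= 0) ->
  A <= 0 /\ C <= 0 /\ B ^ 2 <= A * C.
Proof.
  intros H.
  pose proof (H 1 0) as HA. pose proof (H 0 1) as HC.
  assert (HA' : A <= 0) by nra. assert (HC' : C <= 0) by nra.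
  split; [exact HA' | split; [exact HC' |]].
  destruct (Rlt_or_le A 0) as [Hlt | Hge].
  - pose proof (H B (- A)). nra.
  - assert (A = 0) by lra. subst A.
    destruct (Req_dec B 0) as [-> | HB]; [nra |].
    pose proof (H ((1 - C) / (2 * B)) 1) as H4.
    replace (((1 - C) / (2 * B)) ^ 2 * 0 + 2 * ((1 - C) / (2 * B)) * 1 * B + 1 ^ 2 * C)
      with 1 in H4 by (field; exact HB).
    lra.
Qed.

Lemma deriv_tower_second_directional (F : R -> R -> R) x0 y0 v1 v2 :
  deriv_tower F x0 y0 -> exists (dF : R -> R) e, 0 < e /\
    (forall s, Rabs s < e -> is_derive (fun s => F (x0 + s * v1) (y0 + s * v2)) s (dF s)) /\
    is_derive dF 0 (v1 ^ 2 * fxx F x0 y0 + 2 * v1 * v2 * fxy F x0 y0 + v2 ^ 2 * fyy F x0 y0).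
Proof.
  intros [A [rho [Hrho [Heq [Hline _]]]]].
  assert (Hx : Rabs (x0 - x0) < rho) by (rewrite Rminus_diag, Rabs_R0; lra).
  assert (Hy : Rabs (y0 - y0) < rho) by (rewrite Rminus_diag, Rabs_R0; lra).
  destruct (is_derive_tower_line F x0 y0 rho A Hrho Heq Hline v1 v2) as [e [He Hd]].
  eexists; exists e. split; [exact He | split; [exact Hd |]].
  rewrite (fxx_tower F x0 y0 rho A Heq Hline x0 y0 Hx Hy),
          (fxy_tower F x0 y0 rho A Heq Hline x0 y0 Hx Hy),
          (fyy_tower F x0 y0 rho A Heq Hline x0 y0 Hx Hy).
  apply (is_derive_tower_line2 x0 y0 rho A Hrho Hline v1 v2).
Qed.

Lemma local_max_hessian_nsd (F G : R -> R -> R) x0 y0 dl :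
  deriv_tower F x0 y0 -> deriv_tower G x0 y0 ->
  (exists e, 0 < e /\ forall x y, Rabs (x - x0) < e -> Rabs (y - y0) < e ->
     F x y + dl * (x ^ 2 + y ^ 2) - G x y <= F x0 y0 + dl * (x0 ^ 2 + y0 ^ 2) - G x0 y0) ->
  forall v1 v2, v1 ^ 2 * (fxx F x0 y0 + 2 * dl - fxx G x0 y0)
                + 2 * v1 * v2 * (fxy F x0 y0 - fxy G x0 y0)
                + v2 ^ 2 * (fyy F x0 y0 + 2 * dl - fyy G x0 y0) <= 0.
Proof.
  intros HF HG [e [He Hmax]] v1 v2.
  destruct (deriv_tower_second_directional F x0 y0 v1 v2 HF) as [dF [e1 [He1 [Hd1 Hdd1]]]].
  destruct (deriv_tower_second_directional G x0 y0 v1 v2 HG) as [dG [e2 [He2 [Hd2 Hdd2]]]].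
  pose proof (Rabs_plus_Rabs_plus1_pos v1 v2).
  set (e3 := e / (Rabs v1 + Rabs v2 + 1)).
  assert (He3 : 0 < e3) by (apply Rdiv_lt_0_compat; lra).
  set (em := Rmin e1 (Rmin e2 e3)).
  assert (Hem : 0 < em /\ em <= e1 /\ em <= e2 /\ em <= e3).
  { unfold em. pose proof (Rmin_l e1 (Rmin e2 e3)). pose proof (Rmin_r e1 (Rmin e2 e3)).
    pose proof (Rmin_l e2 e3). pose proof (Rmin_r e2 e3).
    repeat split; try lra. apply Rmin_glb_lt; [| apply Rmin_glb_lt]; assumption. }
  set (dsq := fun s => 2 * (x0 + s * v1) * v1 + 2 * (y0 + s * v2) * v2).
  apply (second_deriv_nonpos_of_local_max
    (fun s => F (x0 + s * v1) (y0 + s * v2) + dl * ((x0 + s * v1) ^ 2 + (y0 + s * v2) ^ 2)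
              - G (x0 + s * v1) (y0 + s * v2))
    (fun s => dF s + dl * dsq s - dG s) em); [lra | | |].
  - intros s Hs. apply is_derive_Rminus; [apply is_derive_Rplus |].
    + apply Hd1. lra.
    + apply is_derive_scal. eapply is_derive_value.
      * apply is_derive_Rplus; apply is_derive_pow, is_derive_affine.
      * unfold dsq. simpl. ring.
    + apply Hd2. lra.
  - eapply is_derive_value.
    + apply is_derive_Rminus; [apply is_derive_Rplus; [exact Hdd1 |] | exact Hdd2].
      apply is_derive_scal.
      apply (is_derive_affine_ext (2 * x0 * v1 + 2 * y0 * v2) (2 * v1 ^ 2 + 2 * v2 ^ 2)).
      intros s. unfold dsq. ring.
    + ring.
  - intros s Hs.
    destruct (Rabs_mult_lt_of_small e s v1 v2 ltac:(fold e3; lra)) as [Hx Hy].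
    rewrite !Rmult_0_l, !Rplus_0_r.
    apply Hmax; [replace (x0 + s * v1 - x0) with (s * v1) by ring
                | replace (y0 + s * v2 - y0) with (s * v2) by ring]; assumption.
Qed.

(* At a maximum of [f + dl (x^2 + y^2) - g] the Hessian of [g] exceeds that of [f] by at least
   [2 dl I], which ellipticity forbids. *)
Lemma pde_solutions_no_strict_gap t dl a1 b1 c1 a2 b2 c2 : 0 < dl ->
  solves_pde t a1 b1 c1 -> solves_pde t a2 b2 c2 ->
  (forall v1 v2, v1 ^ 2 * (a1 + 2 * dl - a2) + 2 * v1 * v2 * (b1 - b2)
                 + v2 ^ 2 * (c1 + 2 * dl - c2) <= 0) -> False.
Proof.
  intros Hdl E1 E2 Hquad.
  destruct (quadratic_form_nonpos_nsd _ _ _ Hquad) as [Ha [Hc Hb]].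
  pose proof (psd_increment_trace_nonpos t a1 b1 c1 (a2 - a1) (b2 - b1) (c2 - c1) E1) as Hell.
  replace (a1 + (a2 - a1)) with a2 in Hell by ring.
  replace (b1 + (b2 - b1)) with b2 in Hell by ring.
  replace (c1 + (c2 - c1)) with c2 in Hell by ring.
  assert (Hpsd : (b2 - b1) ^ 2 <= (a2 - a1) * (c2 - c1)).
  { replace ((b2 - b1) ^ 2) with ((b1 - b2) ^ 2) by ring.
    assert (0 <= 2 * dl * ((a2 - a1) + (c2 - c1) - 2 * dl)) by (apply Rmult_le_pos; lra).
    nra. }
  specialize (Hell E2 ltac:(lra) ltac:(lra) Hpsd). lra.
Qed.

Lemma is_lim_seq_0_bounded (u : nat -> R) : is_lim_seq u 0 -> exists B, forall n, Rabs (u n) <= B.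
Proof.
  intros H. apply is_lim_seq_Reals in H. destruct (H 1 ltac:(lra)) as [N HN].
  set (S := sum_f_R0 (fun k => Rabs (u k)) N).
  assert (0 <= S) by (apply cond_pos_sum; intros; apply Rabs_pos).
  exists (1 + S). intros n.
  destruct (Compare_dec.le_lt_dec N n) as [Hn | Hn].
  - specialize (HN n Hn). unfold R_dist in HN. rewrite Rminus_0_r in HN. lra.
  - assert (Rabs (u n) <= S) by (apply (sum_f_R0_term_le (fun k => Rabs (u k)));
                                  [intros; apply Rabs_pos | lia]).
    lra.
Qed.

Lemma analytic1_continuity g : analytic1 g -> forall a, continuity_pt g a.
Proof.
  intros Hg a. destruct (Hg a) as [c [r [Hr Hc]]].
  assert (Hsum : forall h, Rabs h < r ->
            is_lim_seq (sum_n (fun i => c i * h ^ i)) (g (a + h))).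
  { intros h Hh. eapply is_lim_seq_ext; [| apply (Hc (a + h)); replace (a + h - a) with h by ring; exact Hh].
    intros n. rewrite sum_n_Reals. apply sum_eq. intros; replace (a + h - a) with h by ring; reflexivity. }
  assert (HP : forall x, Rabs (x - a) < r -> PSeries c (x - a) = g x).
  { intros x Hx. unfold PSeries, Series.
    replace (g x) with (g (a + (x - a))) by (f_equal; ring).
    rewrite (is_lim_seq_unique _ _ (Hsum (x - a) Hx)). reflexivity. }
  assert (Hrad : Rbar_lt (Rabs 0) (CV_radius c)).
  { rewrite Rabs_R0.
    assert (Hle : Rbar_le (r / 2) (CV_radius c)).
    { apply (proj1 (CV_radius_bounded c)).
      apply is_lim_seq_0_bounded, ex_series_lim_0.
      exists (g (a + r / 2)). apply Hsum. rewrite Rabs_right; lra. }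
    destruct (CV_radius c) as [rc | |]; simpl in *; lra || exact I. }
  apply continuity_pt_ext_loc with (fun x => PSeries c (x - a)).
  - eapply filter_imp; [| apply (locally_Rabs_lt a a r ltac:(rewrite Rminus_diag, Rabs_R0; lra))].
    intros x Hx. apply HP, Hx.
  - apply (continuity_pt_comp (fun x => x - a) (PSeries c)).
    + apply continuity_pt_minus; [apply continuity_pt_id | apply continuity_pt_const; intros ? ?; reflexivity].
    + rewrite Rminus_diag. apply PSeries_continuity, Hrad.
Qed.

Lemma periodic_shift {X : Type} (g : R -> X) T :
  (forall s, g (s + T) = g s) -> forall n s, g (s + INR n * T) = g s.
Proof.
  intros Hp n. induction n as [| n IH]; intros s.
  - simpl. rewrite Rmult_0_l, Rplus_0_r. reflexivity.
  - rewrite S_INR. replace (s + (INR n + 1) * T) with ((s + INR n * T) + T) by ring.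
    rewrite Hp. apply IH.
Qed.

Lemma periodic_representative {X : Type} (g : R -> X) T : 0 < T ->
  (forall s, g (s + T) = g s) -> forall s, exists s0, 0 <= s0 <= T /\ g s = g s0.
Proof.
  intros HT Hp s.
  assert (Hdiv : forall x, x / T * T = x) by (intros; field; lra).
  destruct (nfloor_ex (Rabs s / T)) as [m [_ Hm]]; [apply Rdiv_le_0_compat; [apply Rabs_pos | lra] |].
  set (s' := s + INR (S m) * T).
  assert (Hs' : 0 <= s').
  { unfold s'. rewrite S_INR. pose proof (Rmult_lt_compat_r T _ _ HT Hm) as H.
    rewrite Hdiv in H. pose proof (Rabs_pos s). pose proof (Rle_abs (- s)).
    rewrite Rabs_Ropp in *. lra. }
  destruct (nfloor_ex (s' / T)) as [k [Hk1 Hk2]]; [apply Rdiv_le_0_compat; lra |].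
  exists (s' - INR k * T). split.
  - pose proof (Rmult_le_compat_r T _ _ (Rlt_le _ _ HT) Hk1).
    pose proof (Rmult_lt_compat_r T _ _ HT Hk2). rewrite Hdiv in *. lra.
  - rewrite <- (periodic_shift g T Hp (S m) s). fold s'.
    rewrite <- (periodic_shift g T Hp k (s' - INR k * T)). f_equal. ring.
Qed.

Lemma jordan_domain_bounded Om : jordan_analytic_domain Om -> bounded2 Om.
Proof.
  intros [g1 [g2 [T [_ [_ [_ [_ [_ [_ Hrest]]]]]]]]]. cbv zeta in Hrest. apply Hrest.
Qed.

(* A point of [Om] is at positive distance from the (compact) boundary curve; inside that
   distance the straight segment to any nearby point avoids the curve. *)
Lemma jordan_domain_open Om : jordan_analytic_domain Om -> open2 Om.
Proof.
  intros [g1 [g2 [T [HT [Ha1 [Ha2 [Hper [_ [_ Hrest]]]]]]]]]. cbv zeta in Hrest.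
  destruct Hrest as [_ [_ [Hdisj Hpath]]].
  intros x y Hxy.
  set (d := fun s => Rabs (g1 s - x) + Rabs (g2 s - y)).
  assert (Hdc : forall s, continuity_pt d s).
  { intros s. unfold d.
    apply continuity_pt_plus; apply (continuity_pt_comp _ Rabs); try apply Rcontinuity_abs;
      apply continuity_pt_minus; try (apply continuity_pt_const; intros ? ?; reflexivity);
      apply analytic1_continuity; assumption. }
  destruct (continuity_ab_min d 0 T ltac:(lra) (fun s _ => Hdc s)) as [sm [Hmin Hsm]].
  set (e := d sm).
  assert (He : 0 < e).
  { unfold e, d. pose proof (Rabs_pos (g1 sm - x)). pose proof (Rabs_pos (g2 sm - y)).
    destruct (Req_dec (Rabs (g1 sm - x) + Rabs (g2 sm - y)) 0) as [Hz | Hnz]; [exfalso | lra].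
    apply (Hdisj x y Hxy). exists sm.
    assert (Rabs (g1 sm - x) = 0) as Z1 by lra. assert (Rabs (g2 sm - y) = 0) as Z2 by lra.
    apply Rabs_eq_0 in Z1. apply Rabs_eq_0 in Z2. split; lra. }
  assert (Hfar : forall x' y', Rabs (x' - x) < e / 2 -> Rabs (y' - y) < e / 2 ->
            ~ (exists s, x' = g1 s /\ y' = g2 s)).
  { intros x' y' H1 H2 [s [-> ->]].
    destruct (periodic_representative (fun s => (g1 s, g2 s)) T HT
                (fun s => f_equal2 pair (proj1 (Hper s)) (proj2 (Hper s))) s) as [s0 [Hs0 E]].
    injection E as E1 E2. specialize (Hmin s0 Hs0).
    change (e <= Rabs (g1 s0 - x) + Rabs (g2 s0 - y)) in Hmin.
    rewrite E1 in H1. rewrite E2 in H2. lra. }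
  exists (e / 2). split; [lra |]. intros x' y' Hx' Hy'.
  apply (proj2 (Hpath x y x' y' Hxy)). split; [apply Hfar; assumption |].
  exists (fun s => x + s * (x' - x)), (fun s => y + s * (y' - y)).
  repeat split; try ring.
  - apply derivable_continuous_pt. eexists. apply is_derive_Reals, is_derive_affine.
  - apply derivable_continuous_pt. eexists. apply is_derive_Reals, is_derive_affine.
  - intros s Hs. pose proof (Rabs_pos (x' - x)). pose proof (Rabs_pos (y' - y)).
    apply Hfar; [replace (x + s * (x' - x) - x) with (s * (x' - x)) by ring
                | replace (y + s * (y' - y) - y) with (s * (y' - y)) by ring];
      rewrite Rabs_mult, (Rabs_right s) by lra; nra.
Qed.

Lemma Rinv_INR_S_lt eps : 0 < eps -> exists N, forall n, (N <= n)%nat -> / INR (S n) < eps.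
Proof.
  intros He. destruct (nfloor_ex (/ eps)) as [N [_ HN]]; [apply Rlt_le, Rinv_0_lt_compat, He |].
  exists N. intros n Hn.
  assert (INR N <= INR n) by (apply le_INR, Hn).
  rewrite S_INR. pose proof (pos_INR n).
  rewrite <- (Rinv_inv eps). apply Rinv_lt_contravar; [| lra].
  apply Rmult_lt_0_compat; [apply Rinv_0_lt_compat, He | lra].
Qed.

Lemma extraction_ge (phi : nat -> nat) : (forall n, (phi n < phi (S n))%nat) ->
  forall n, (n <= phi n)%nat.
Proof. intros H n. induction n as [| n IH]; [lia |]. specialize (H n). lia. Qed.

Lemma bounded_seq_cvg_subseq (u : nat -> R) M : (forall n, Rabs (u n) <= M) ->
  exists phi : nat -> nat, (forall n, (phi n < phi (S n))%nat) /\
    exists l : R, is_lim_seq (fun n => u (phi n)) l.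
Proof.
  intros Hb.
  destruct (Bolzano_Weierstrass u (fun c => -M <= c <= M) (compact_P3 (-M) M)) as [l Hl].
  { intros n. apply Rabs_le_between, Hb. }
  (* From the cluster point [l], extract [phi (n+1) > phi n] with [|u (phi n) - l| < 1/(n+1)]. *)
  assert (Hnext : forall N k, {p | (N <= p)%nat /\ Rabs (u p - l) < / INR (S k)}).
  { intros N k. apply constructive_indefinite_description.
    assert (Hk : 0 < / INR (S k)) by (apply Rinv_0_lt_compat, lt_0_INR; lia).
    destruct (Hl (disc l (mkposreal _ Hk)) N) as [p [Hp1 Hp2]].
    - exists (mkposreal _ Hk). intros z Hz. exact Hz.
    - exists p. split; assumption. }
  set (phi := fix f n := match n with
                         | O => proj1_sig (Hnext 0%nat 0%nat)
                         | S n' => proj1_sig (Hnext (S (f n')) n)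
                         end).
  assert (Hinc : forall n, (phi n < phi (S n))%nat).
  { intros n. simpl. destruct (Hnext (S (phi n)) (S n)) as [p [Hp Hp2]]. simpl. lia. }
  assert (Hclose : forall n, Rabs (u (phi n) - l) < / INR (S n)).
  { intros [| n]; simpl.
    - destruct (Hnext 0%nat 0%nat) as [p [Hp1 Hp]]. exact Hp.
    - destruct (Hnext (S (phi n)) (S n)) as [p [Hp1 Hp]]. exact Hp. }
  exists phi. split; [exact Hinc |]. exists l.
  apply is_lim_seq_Reals. intros eps He. destruct (Rinv_INR_S_lt eps He) as [N HN].
  exists N. intros n Hn. unfold R_dist. specialize (HN n Hn). specialize (Hclose n). lra.
Qed.

Lemma bounded_seq2_cvg_subseq (u v : nat -> R) M :
  (forall n, Rabs (u n) <= M) -> (forall n, Rabs (v n) <= M) ->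
  exists phi : nat -> nat, (forall n, (phi n < phi (S n))%nat) /\
    exists lu lv : R, is_lim_seq (fun n => u (phi n)) lu /\ is_lim_seq (fun n => v (phi n)) lv.
Proof.
  intros Hu Hv.
  destruct (bounded_seq_cvg_subseq u M Hu) as [phi1 [Hi1 [lu Hlu]]].
  destruct (bounded_seq_cvg_subseq (fun n => v (phi1 n)) M (fun n => Hv (phi1 n)))
    as [phi2 [Hi2 [lv Hlv]]].
  exists (fun n => phi1 (phi2 n)). split.
  - intros n. pose proof (Hi2 n).
    assert (Hmono : forall a b, (a < b)%nat -> (phi1 a < phi1 b)%nat).
    { intros a b Hab. induction Hab; [apply Hi1 |]. specialize (Hi1 m). lia. }
    apply Hmono. lia.
  - exists lu, lv. split; [| exact Hlv].
    apply (is_lim_seq_subseq (fun n => u (phi1 n)) lu phi2); [apply eventually_subseq, Hi2 | exact Hlu].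
Qed.

Section ExtremeValue.

Variable K : R -> R -> Prop.
Variable phi : R -> R -> R.
Variable M : R.
Hypothesis K_bounded : forall x y, K x y -> Rabs x <= M /\ Rabs y <= M.
Hypothesis K_closed : forall x y, closure2 K x y -> K x y.
Hypothesis phi_continuous : forall x y, K x y -> continuity_2d_pt phi x y.

Lemma cvg_subseq_in_compact (a b : nat -> R) : (forall n, K (a n) (b n)) ->
  exists sg : nat -> nat, (forall n, (sg n < sg (S n))%nat) /\ exists x y, K x y /\
    is_lim_seq (fun n => phi (a (sg n)) (b (sg n))) (phi x y).
Proof.
  intros HK.
  destruct (bounded_seq2_cvg_subseq a b M (fun n => proj1 (K_bounded _ _ (HK n)))
              (fun n => proj2 (K_bounded _ _ (HK n)))) as [sg [Hsg [lu [lv [Hlu Hlv]]]]].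
  apply is_lim_seq_Reals in Hlu. apply is_lim_seq_Reals in Hlv.
  assert (HKl : K lu lv).
  { apply K_closed. intros e He. destruct (Hlu e He) as [N1 HN1]. destruct (Hlv e He) as [N2 HN2].
    exists (a (sg (max N1 N2))), (b (sg (max N1 N2))).
    split; [apply HK | split; [apply (HN1 (max N1 N2)) | apply (HN2 (max N1 N2))]; lia]. }
  exists sg. split; [exact Hsg |]. exists lu, lv. split; [exact HKl |].
  apply is_lim_seq_Reals. intros eps He.
  destruct (phi_continuous lu lv HKl (mkposreal eps He)) as [d Hd].
  destruct (Hlu d (cond_pos d)) as [N1 HN1]. destruct (Hlv d (cond_pos d)) as [N2 HN2].
  exists (max N1 N2). intros n Hn. apply Hd; [apply (HN1 n) | apply (HN2 n)]; lia.
Qed.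

Lemma bounded_above_on_compact : exists B, forall x y, K x y -> phi x y <= B.
Proof.
  apply NNPP. intros Hn.
  assert (Hs : forall n, exists z : R * R, K (fst z) (snd z) /\ INR n < phi (fst z) (snd z)).
  { intros n. apply NNPP. intros Hc. apply Hn. exists (INR n). intros x y Hxy.
    apply Rnot_lt_le. intros Hlt. apply Hc. exists (x, y). split; assumption. }
  destruct (choice _ Hs) as [z Hz].
  destruct (cvg_subseq_in_compact (fun n => fst (z n)) (fun n => snd (z n)) (fun n => proj1 (Hz n)))
    as [sg [Hsg [x [y [Hxy Hl]]]]].
  apply is_lim_seq_Reals in Hl. destruct (Hl 1 ltac:(lra)) as [N HN].
  destruct (nfloor_ex (Rabs (phi x y) + 1)) as [n0 [_ Hn0]]; [pose proof (Rabs_pos (phi x y)); lra |].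
  set (n := max N (S n0)).
  specialize (HN n ltac:(unfold n; lia)). unfold R_dist in HN. apply Rabs_def2 in HN.
  destruct (Hz (sg n)) as [_ Hgt].
  assert (INR n <= INR (sg n)) by (apply le_INR, extraction_ge, Hsg).
  assert (INR (S n0) <= INR n) by (apply le_INR; unfold n; lia).
  rewrite S_INR in *. pose proof (Rle_abs (phi x y)). lra.
Qed.

Lemma max_attained_on_compact x1 y1 : K x1 y1 ->
  exists xm ym, K xm ym /\ forall x y, K x y -> phi x y <= phi xm ym.
Proof.
  intros H1. destruct bounded_above_on_compact as [B HB].
  set (E := fun v => exists x y, K x y /\ v = phi x y).
  destruct (completeness E) as [s [Hub Hlub]].
  { exists B. intros v [x [y [Hxy ->]]]. apply HB, Hxy. }
  { exists (phi x1 y1), x1, y1. split; [exact H1 | reflexivity]. }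
  assert (Hs : forall n, exists z : R * R, K (fst z) (snd z) /\ s - / INR (S n) < phi (fst z) (snd z)).
  { intros n. apply NNPP. intros Hc.
    assert (0 < / INR (S n)) by (apply Rinv_0_lt_compat, lt_0_INR; lia).
    assert (s <= s - / INR (S n)); [| lra].
    apply Hlub. intros v [x [y [Hxy ->]]]. apply Rnot_lt_le. intros Hlt.
    apply Hc. exists (x, y). split; assumption. }
  destruct (choice _ Hs) as [z Hz].
  destruct (cvg_subseq_in_compact (fun n => fst (z n)) (fun n => snd (z n)) (fun n => proj1 (Hz n)))
    as [sg [Hsg [xm [ym [Hm Hl]]]]].
  exists xm, ym. split; [exact Hm |].
  assert (Hge : s <= phi xm ym).
  { apply Rnot_lt_le. intros Hlt.
    set (eps := (s - phi xm ym) / 2). assert (He : 0 < eps) by (unfold eps; lra).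
    apply is_lim_seq_Reals in Hl. destruct (Hl eps He) as [N1 HN1].
    destruct (Rinv_INR_S_lt eps He) as [N2 HN2].
    set (n := max N1 N2).
    specialize (HN1 n ltac:(unfold n; lia)). unfold R_dist in HN1. apply Rabs_def2 in HN1.
    destruct (Hz (sg n)) as [_ Hgt].
    pose proof (extraction_ge sg Hsg n).
    specialize (HN2 (sg n) ltac:(unfold n in *; lia)).
    unfold eps in *. lra. }
  intros x y Hxy. apply Rle_trans with s; [| exact Hge]. apply Hub. exists x, y. split; [exact Hxy | reflexivity].
Qed.

End ExtremeValue.

Lemma closure2_incl (S : R -> R -> Prop) x y : S x y -> closure2 S x y.
Proof. intros H e He. exists x, y. rewrite !Rminus_diag, !Rabs_R0. auto. Qed.

Lemma closure2_idem (S : R -> R -> Prop) x y : closure2 (closure2 S) x y -> closure2 S x y.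
Proof.
  intros H e He. destruct (H (e / 2) ltac:(lra)) as [x1 [y1 [H1 [Hx1 Hy1]]]].
  destruct (H1 (e / 2) ltac:(lra)) as [x2 [y2 [H2 [Hx2 Hy2]]]].
  exists x2, y2. split; [exact H2 |].
  pose proof (Rabs_triang (x2 - x1) (x1 - x)). pose proof (Rabs_triang (y2 - y1) (y1 - y)).
  replace (x2 - x1 + (x1 - x)) with (x2 - x) in * by ring.
  replace (y2 - y1 + (y1 - y)) with (y2 - y) in * by ring.
  split; lra.
Qed.

Lemma closure2_bounded (S : R -> R -> Prop) : bounded2 S ->
  exists M, 0 < M /\ forall x y, closure2 S x y -> Rabs x <= M /\ Rabs y <= M.
Proof.
  intros [M0 HM0]. exists (Rabs M0 + 1). split; [pose proof (Rabs_pos M0); lra |].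
  intros x y Hxy. destruct (Hxy 1 ltac:(lra)) as [x' [y' [H' [Hx Hy]]]].
  destruct (HM0 x' y' H'). pose proof (Rle_abs M0).
  rewrite Rabs_minus_sym in Hx, Hy.
  pose proof (Rabs_triang x' (x - x')). pose proof (Rabs_triang y' (y - y')).
  replace (x' + (x - x')) with x in * by ring. replace (y' + (y - y')) with y in * by ring.
  split; lra.
Qed.

Lemma sum_zero_pow (X : nat -> R) N : sum_f_R0 (fun m => X m * 0 ^ m) N = X 0%nat.
Proof. induction N as [| N IH]; simpl; [ring |]. rewrite IH. ring. Qed.

Lemma deriv_tower_slice (f : R -> R -> R -> R) (U : R -> R -> R -> Prop) x0 y0 t :
  analytic3_on U f -> U x0 y0 t -> deriv_tower (slice f t) x0 y0.
Proof.
  intros HA HU. destruct (HA x0 y0 t HU) as [c [r [Hr [[M HM] Hcv]]]].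
  apply (deriv_tower_of_series (slice f t) x0 y0 (fun i j => c i j 0%nat) r M Hr).
  - intros N. eapply Rle_trans; [| apply (HM N)]. unfold sum2, psum3.
    apply sum_Rle. intros i _. apply sum_Rle. intros j _.
    eapply Rle_trans;
      [| apply (sum_f_R0_term_le (fun m => Rabs (c i j m) * r ^ i * r ^ j * r ^ m) N 0%nat); [| lia]].
    + simpl. lra.
    + intros m. pose proof (pow_le r i (Rlt_le _ _ Hr)). pose proof (pow_le r j (Rlt_le _ _ Hr)).
      pose proof (pow_le r m (Rlt_le _ _ Hr)). pose proof (Rabs_pos (c i j m)).
      repeat apply Rmult_le_pos; assumption.
  - intros x y Hx Hy. unfold slice.
    specialize (Hcv x y t Hx Hy ltac:(rewrite Rminus_diag, Rabs_R0; lra)).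
    rewrite Rminus_diag in Hcv.
    eapply is_lim_seq_ext; [| apply Hcv]. intros N. unfold psum3, sum2.
    apply sum_eq. intros i _. apply sum_eq. intros j _.
    apply (sum_zero_pow (fun m => c i j m * (x - x0) ^ i * (y - y0) ^ j)).
Qed.

Lemma admissible_slice_tower Om f0 eps f t x y :
  admissible_family Om f0 eps f -> -eps <= t <= eps -> closure2 Om x y ->
  deriv_tower (slice f t) x y.
Proof.
  intros [[U [_ [HKU HAU]]] _] Ht Hxy. apply (deriv_tower_slice f U); auto.
Qed.

Section Comparison.

Variable Om : R -> R -> Prop.
Variable f0 : R -> R -> R.
Variables eps t : R.
Variables f g : R -> R -> R -> R.
Hypothesis Om_jordan : jordan_analytic_domain Om.
Hypothesis f_adm : admissible_family Om f0 eps f.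
Hypothesis g_adm : admissible_family Om f0 eps g.
Hypothesis t_range : -eps <= t <= eps.

Lemma perturbed_difference_le M dl : 0 < dl ->
  (forall x y, closure2 Om x y -> Rabs x <= M /\ Rabs y <= M) ->
  forall x y, closure2 Om x y -> f x y t + dl * (x ^ 2 + y ^ 2) - g x y t <= 2 * dl * M ^ 2.
Proof.
  intros Hdl HM x y Hxy.
  set (phi := fun p q => slice f t p q + dl * (p ^ 2 + q ^ 2) - slice g t p q).
  assert (Hcont : forall p q, closure2 Om p q -> continuity_2d_pt phi p q).
  { intros p q Hpq. unfold phi.
    destruct (admissible_slice_tower Om f0 eps f t p q f_adm t_range Hpq) as [A [r [Hr [HG [HL HK]]]]].
    destruct (admissible_slice_tower Om f0 eps g t p q g_adm t_range Hpq) as [B [s [Hs [HG' [HL' HK']]]]].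
    apply continuity_2d_pt_minus; [apply continuity_2d_pt_plus |].
    - apply (tower_continuous _ p q r A); assumption.
    - apply continuity_2d_pt_mult; [apply continuity_2d_pt_const |].
      apply continuity_2d_pt_plus;
        eapply continuity_2d_pt_ext; [| apply continuity_2d_pt_mult; apply continuity_2d_pt_id1
                                     | | apply continuity_2d_pt_mult; apply continuity_2d_pt_id2];
        intros; simpl; ring.
    - apply (tower_continuous _ p q s B); assumption. }
  destruct (max_attained_on_compact (closure2 Om) phi M HM (closure2_idem Om) Hcont x y Hxy)
    as [xm [ym [Hm Hmax]]].
  apply Rle_trans with (phi xm ym); [apply Hmax, Hxy |].
  destruct (classic (Om xm ym)) as [Hin | Hout].
  - exfalso. destruct f_adm as [_ [Hpde_f _]]. destruct g_adm as [_ [Hpde_g _]].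
    destruct (jordan_domain_open Om Om_jordan xm ym Hin) as [e [He Hball]].
    apply (pde_solutions_no_strict_gap t dl _ _ _ _ _ _ Hdl (Hpde_f xm ym t Hin t_range)
             (Hpde_g xm ym t Hin t_range)).
    apply (local_max_hessian_nsd (slice f t) (slice g t) xm ym dl
             (admissible_slice_tower Om f0 eps f t xm ym f_adm t_range Hm)
             (admissible_slice_tower Om f0 eps g t xm ym g_adm t_range Hm)).
    exists e. split; [exact He |]. intros p q Hp Hq.
    apply (Hmax p q), closure2_incl, Hball; assumption.
  - destruct f_adm as [_ [_ [_ Hbd_f]]]. destruct g_adm as [_ [_ [_ Hbd_g]]].
    assert (Hb : boundary2 Om xm ym) by (split; assumption).
    unfold phi, slice. rewrite (Hbd_f xm ym t Hb t_range), (Hbd_g xm ym t Hb t_range).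
    destruct (HM xm ym Hm) as [H1 H2].
    rewrite <- (pow2_abs xm), <- (pow2_abs ym).
    pose proof (Rabs_pos xm). pose proof (Rabs_pos ym).
    assert (Rabs xm ^ 2 <= M ^ 2) by (apply pow_incr; lra).
    assert (Rabs ym ^ 2 <= M ^ 2) by (apply pow_incr; lra).
    nra.
Qed.

Lemma admissible_family_le x y : closure2 Om x y -> f x y t - g x y t <= 0.
Proof.
  intros Hxy.
  destruct (closure2_bounded Om (jordan_domain_bounded Om Om_jordan)) as [M [HM0 HM]].
  apply Rnot_lt_le. intros Hpos.
  set (D := f x y t - g x y t) in *.
  assert (HM2 : 0 < 4 * M ^ 2) by (apply Rmult_lt_0_compat; [lra | apply pow_lt; lra]).
  pose proof (perturbed_difference_le M (D / (4 * M ^ 2)) ltac:(apply Rdiv_lt_0_compat; lra) HM x y Hxy)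
    as Hle.
  replace (2 * (D / (4 * M ^ 2)) * M ^ 2) with (D / 2) in Hle by (field; lra).
  assert (0 <= D / (4 * M ^ 2) * (x ^ 2 + y ^ 2)).
  { apply Rmult_le_pos; [apply Rlt_le, Rdiv_lt_0_compat; lra |].
    pose proof (pow2_ge_0 x). pose proof (pow2_ge_0 y). lra. }
  unfold D in *. lra.
Qed.

End Comparison.

Theorem corollary3 (Om : R -> R -> Prop) (f0 : R -> R -> R) (eps : R) :
  jordan_analytic_domain Om ->
  analytic2_near (closure2 Om) f0 ->
  (forall x y, Om x y -> fxx f0 x y + fyy f0 x y = 0) ->
  (forall x y, closure2 Om x y ->
     fxx f0 x y * fyy f0 x y - (fxy f0 x y) ^ 2 <> 0) ->
  0 < eps ->
  forall f g : R -> R -> R -> R,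
    admissible_family Om f0 eps f ->
    admissible_family Om f0 eps g ->
    forall x y t, closure2 Om x y -> -eps <= t <= eps -> f x y t = g x y t.
Proof.
  (* Uniqueness is a comparison principle in each slice; the hypotheses on [f0] matter only
     for existence. *)
  intros HJ _ _ _ _ f g Hf Hg x y t Hxy Ht.
  pose proof (admissible_family_le Om f0 eps t f g HJ Hf Hg Ht x y Hxy).
  pose proof (admissible_family_le Om f0 eps t g f HJ Hg Hf Ht x y Hxy).
  lra.
Qed.
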